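(* Let $A\in H_n$ and $B\in H_k$ be matrices that are neither positive semidefinite nor negative semidefinite. Then there exists a positive unital linear map $\Phi:H_n\to H_k$ with $\Phi(A)=B$ if and only if $\|A_+\|_\infty\geq\|B_+\|_\infty$ and $\|A_-\|_\infty\geq\|B_-\|_\infty$.
   Context: $H_n$ denotes the real vector space of $n\times n$ complex Hermitian matrices; $X\geq0$ means $X$ is positive semidefinite. A linear map $\Phi:H_n\to H_k$ is positive if $\Phi(X)\geq0$ for all $X\geq0$, and unital if $\Phi(\mathbb{1}_n)=\mathbb{1}_k$. Every $A\in H_n$ decomposes uniquely as $A=A_+-A_-$ with $A_+,A_-$ positive semidefinite and $A_+A_-=0$ (positive and negative parts). $\|\cdot\|_\infty$ is the operator norm (largest singular value). *)

From HB Require Import structures.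
From mathcomp Require Import all_boot all_order all_algebra.
From mathcomp Require Import boolp classical_sets reals.
From mathcomp Require Import complex.
Set Implicit Arguments. Unset Strict Implicit. Unset Printing Implicit Defensive.
Import Order.TTheory GRing.Theory Num.Theory.
Local Open Scope ring_scope.
Local Open Scope classical_set_scope.

Section Defs.
Variable R : realType.

Definition adjmx m n (M : 'M[R[i]]_(m, n)) : 'M[R[i]]_(n, m) :=
  (map_mx Num.conj M)^T.

Definition is_herm n (X : 'M[R[i]]_n) : Prop := adjmx X = X.

Definition is_psd n (X : 'M[R[i]]_n) : Prop :=
  is_herm X /\ forall x : 'cV[R[i]]_n, 0 <= (adjmx x *m X *m x) ord0 ord0.

Definition vnorm n (x : 'cV[R[i]]_n) : R :=
  Num.sqrt (\sum_(j < n) ((@complex.Re R (x j ord0)) ^+ 2 + (@complex.Im R (x j ord0)) ^+ 2)).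

Definition opnorm m n (M : 'M[R[i]]_(m, n)) : R :=
  sup [set vnorm (M *m x) | x in [set x : 'cV[R[i]]_n | vnorm x = 1]].

(* the (unique) decomposition A = A_+ - A_-, A_+, A_- >= 0, A_+ A_- = 0 *)
Definition is_posneg_decomp n (A : 'M[R[i]]_n) (p : 'M[R[i]]_n * 'M[R[i]]_n) : Prop :=
  [/\ is_psd p.1, is_psd p.2, p.1 *m p.2 = 0 & A = p.1 - p.2].

Definition posneg n (A : 'M[R[i]]_n) : 'M[R[i]]_n * 'M[R[i]]_n :=
  xget (0, 0) [set p | is_posneg_decomp A p].

Definition pos_part n (A : 'M[R[i]]_n) := (posneg A).1.
Definition neg_part n (A : 'M[R[i]]_n) := (posneg A).2.

(* A real-linear map H_n -> H_k, represented by a function on all n x n matrices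
   whose behaviour is only constrained on H_n. *)
Definition real_linear_on_herm n k (Phi : 'M[R[i]]_n -> 'M[R[i]]_k) : Prop :=
  [/\ forall X, is_herm X -> is_herm (Phi X),
      forall X Y, is_herm X -> is_herm Y -> Phi (X + Y) = Phi X + Phi Y &
      forall (r : R) X, is_herm X -> Phi ((r%:C)%C *: X) = (r%:C)%C *: Phi X].

Definition positive_map n k (Phi : 'M[R[i]]_n -> 'M[R[i]]_k) : Prop :=
  forall X, is_psd X -> is_psd (Phi X).

Definition unital_map n k (Phi : 'M[R[i]]_n -> 'M[R[i]]_k) : Prop :=
  Phi 1%:M = 1%:M.

End Defs.

(* For a Hermitian matrix A write lambda(A) for its largest eigenvalue, used
   through its variational characterisation (the predicate [top_eigen] below):
   a unit vector u with <u, A u> = lambda(A) and <x, A x> <= lambda(A) |x|^2.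

   1. The spectral theorem (library [spectral]) diagonalises A unitarily; it
      yields lambda(A) and the decomposition A = A_+ - A_-.
   2. For ANY decomposition A = P - N with P, N >= 0 and P N = 0 we show
      ||P|| = max(lambda(A), 0): the lower bound since <u, P u> >= <u, A u>,
      the upper bound by Cauchy-Schwarz, using that N vanishes on the range
      of P.  Applied to A and -A: for indefinite A, ||A_+|| = lambda(A) > 0
      and ||A_-|| = lambda(-A) > 0.
   3. Necessity: Phi maps the positive matrix lambda(A) 1 - A to
      lambda(A) 1 - B, whence lambda(B) <= lambda(A); similarly for -A.
   4. Sufficiency: with B = V^* diag(b) V and u, v extremal vectors of A and
      -A, the map X |-> V^* diag(t_j <u,Xu> + (1 - t_j) <v,Xv>) V, where
      t_j = (b_j + lambda(-A)) / (lambda(A) + lambda(-A)) lies in [0, 1],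
      is positive, unital and sends A to B. *)

From HB Require Import structures.
From mathcomp Require Import all_boot all_order all_algebra.
From mathcomp Require Import boolp classical_sets reals.
From mathcomp Require Import complex.
From mathcomp Require Import spectral.
From mathcomp Require Import ring lra.
Import Order.TTheory GRing.Theory Num.Theory.
Local Open Scope ring_scope.

Section PositiveUnitalMaps.
Set Implicit Arguments. Unset Strict Implicit. Unset Printing Implicit Defensive.
Variable R : realType.
Local Notation C := R[i].

Lemma adjmxM m n p (M : 'M[C]_(m, n)) (N : 'M[C]_(n, p)) :
  adjmx (M *m N) = adjmx N *m adjmx M.
Proof. by rewrite /adjmx map_mxM trmx_mul. Qed.

Lemma adjmxK m n (M : 'M[C]_(m, n)) : adjmx (adjmx M) = M.
Proof. by apply/matrixP => i j; rewrite !mxE conjCK. Qed.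

Lemma adjmxD m n (M N : 'M[C]_(m, n)) : adjmx (M + N) = adjmx M + adjmx N.
Proof. by apply/matrixP => i j; rewrite !mxE rmorphD. Qed.

Lemma adjmxN m n (M : 'M[C]_(m, n)) : adjmx (- M) = - adjmx M.
Proof. by apply/matrixP => i j; rewrite !mxE rmorphN. Qed.

Lemma adjmxZ m n a (M : 'M[C]_(m, n)) : adjmx (a *: M) = a^* *: adjmx M.
Proof. by apply/matrixP => i j; rewrite !mxE rmorphM. Qed.

Lemma adjmx0 m n : adjmx (0 : 'M[C]_(m, n)) = 0.
Proof. by apply/matrixP => i j; rewrite !mxE rmorph0. Qed.

Lemma adjmx1 n : adjmx (1%:M : 'M[C]_n) = 1%:M.
Proof.
by apply/matrixP => i j; rewrite !mxE eq_sym; case: (i == j); rewrite ?rmorph1 ?rmorph0.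
Qed.

Lemma herm1 n : is_herm (1%:M : 'M[C]_n).
Proof. exact: adjmx1. Qed.

Lemma hermN n (A : 'M[C]_n) : is_herm A -> is_herm (- A).
Proof. by rewrite /is_herm adjmxN => ->. Qed.

Lemma hermD n (A B : 'M[C]_n) : is_herm A -> is_herm B -> is_herm (A + B).
Proof. by rewrite /is_herm adjmxD => -> ->. Qed.

Lemma conjC_real (r : R) : ((r%:C)%C : C)^* = (r%:C)%C.
Proof. exact: conjc_real. Qed.

Lemma hermZ n (r : R) (A : 'M[C]_n) : is_herm A -> is_herm ((r%:C)%C *: A).
Proof. by rewrite /is_herm adjmxZ conjC_real => ->. Qed.

(* For Hermitian P, N, the relation P N = 0 implies N P = (P N)^* = 0. *)
Lemma psd_mul_swap n (P N : 'M[C]_n) : is_psd P -> is_psd N ->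
  P *m N = 0 -> N *m P = 0.
Proof.
by move=> [hP _] [hN _] hPN; have := congr1 (@adjmx _ _ _) hPN; rewrite adjmxM hN hP adjmx0.
Qed.

(* The sesquilinear form <x, P y> and the quadratic form <x, P x>, the latter
   taken as a real number (it is real when P is Hermitian). *)
Definition form n (P : 'M[C]_n) (x y : 'cV[C]_n) : C := (adjmx x *m P *m y) ord0 ord0.
Definition qform n (P : 'M[C]_n) (x : 'cV[C]_n) : R := complex.Re (form P x x).

Lemma form_conj n (P : 'M[C]_n) x y : is_herm P -> (form P x y)^* = form P y x.
Proof.
move=> hP; rewrite /form.
have -> : ((adjmx x *m P *m y) ord0 ord0)^* = adjmx (adjmx x *m P *m y) ord0 ord0.
  by rewrite !mxE.
by rewrite !adjmxM adjmxK hP mulmxA.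
Qed.

Lemma conj_fixed_real (z : C) : z^* = z -> z = ((complex.Re z)%:C)%C.
Proof.
case: z => a b /= [] h; congr (Complex _ _).
have : b + b = 0 by rewrite -{1}h addNr.
by move/eqP; rewrite -mulr2n -mulr_natr mulf_eq0 pnatr_eq0 orbF => /eqP.
Qed.

Lemma form_real n (P : 'M[C]_n) x : is_herm P -> form P x x = ((qform P x)%:C)%C.
Proof. by move=> hP; apply: conj_fixed_real; rewrite form_conj. Qed.

Lemma psd_qform n (P : 'M[C]_n) x : is_psd P -> 0 <= qform P x.
Proof. by case=> hP /(_ x); rewrite -/(form P x x) (form_real x hP) lecR. Qed.

Lemma psdP n (P : 'M[C]_n) : is_herm P -> (forall x, 0 <= qform P x) -> is_psd P.
Proof. by move=> hP H; split => // x; rewrite -/(form P x x) form_real // lecR. Qed.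

Lemma formDl n (P : 'M[C]_n) x y z : form P (x + y) z = form P x z + form P y z.
Proof. by rewrite /form adjmxD !mulmxDl mxE. Qed.

Lemma formDr n (P : 'M[C]_n) x y z : form P x (y + z) = form P x y + form P x z.
Proof. by rewrite /form mulmxDr mxE. Qed.

Lemma formZl n (P : 'M[C]_n) a x y : form P (a *: x) y = a^* * form P x y.
Proof. by rewrite /form adjmxZ -!scalemxAl mxE. Qed.

Lemma formZr n (P : 'M[C]_n) x a y : form P x (a *: y) = a * form P x y.
Proof. by rewrite /form -scalemxAr mxE. Qed.

Lemma formNl n (P : 'M[C]_n) x y : form P (- x) y = - form P x y.
Proof. by rewrite -scaleN1r formZl rmorphN rmorph1 mulN1r. Qed.

Lemma formNr n (P : 'M[C]_n) x y : form P x (- y) = - form P x y.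
Proof. by rewrite -scaleN1r formZr mulN1r. Qed.

Lemma formMD n (P Q : 'M[C]_n) x y : form (P + Q) x y = form P x y + form Q x y.
Proof. by rewrite /form mulmxDr mulmxDl mxE. Qed.

Lemma formMZ n (P : 'M[C]_n) a x y : form (a *: P) x y = a * form P x y.
Proof. by rewrite /form -scalemxAr -scalemxAl mxE. Qed.

Lemma form_congr n (M D : 'M[C]_n) x y :
  form (adjmx M *m D *m M) x y = form D (M *m x) (M *m y).
Proof. by rewrite /form adjmxM !mulmxA. Qed.

Lemma form_id n (P : 'M[C]_n) x y : form P x y = form 1%:M x (P *m y).
Proof. by rewrite /form mulmx1 mulmxA. Qed.

Lemma qformD n (P Q : 'M[C]_n) x : qform (P + Q) x = qform P x + qform Q x.
Proof. by rewrite /qform formMD raddfD. Qed.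

Lemma qformN n (P : 'M[C]_n) x : qform (- P) x = - qform P x.
Proof. by rewrite /qform -scaleN1r formMZ mulN1r raddfN. Qed.

Lemma qformZ n (r : R) (P : 'M[C]_n) x : qform ((r%:C)%C *: P) x = r * qform P x.
Proof. by rewrite /qform formMZ; case: (form P x x) => a b /=; ring. Qed.

Definition sqmod (z : C) : R := complex.Re z ^+ 2 + complex.Im z ^+ 2.

Lemma sqmod_ge0 z : 0 <= sqmod z.
Proof. by rewrite addr_ge0 // sqr_ge0. Qed.

Lemma conjCM_sqmod (z : C) : z^* * z = ((sqmod z)%:C)%C.
Proof.
case: z => a b; rewrite /sqmod /=.
by apply/eqP; rewrite eq_complex /=; apply/andP; split; apply/eqP; ring.
Qed.

Lemma vnorm_ge0 n (x : 'cV[C]_n) : 0 <= vnorm x.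
Proof. exact: sqrtr_ge0. Qed.

Lemma vnorm2 n (x : 'cV[C]_n) : vnorm x ^+ 2 = \sum_j sqmod (x j ord0).
Proof. by rewrite /vnorm sqr_sqrtr //; apply: sumr_ge0 => j _; exact: sqmod_ge0. Qed.

Lemma form1 n (x : 'cV[C]_n) : form 1%:M x x = ((vnorm x ^+ 2)%:C)%C.
Proof.
rewrite vnorm2 /form mulmx1 mxE rmorph_sum.
by apply: eq_bigr => j _; rewrite !mxE conjCM_sqmod.
Qed.

Lemma qform1 n (x : 'cV[C]_n) : qform 1%:M x = vnorm x ^+ 2.
Proof. by rewrite /qform form1. Qed.

Lemma psd1 n : is_psd (1%:M : 'M[C]_n).
Proof. by apply: psdP; [exact: herm1 | move=> x; rewrite qform1 sqr_ge0]. Qed.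

Lemma vnorm_unitary n (U : 'M[C]_n) x : adjmx U *m U = 1%:M ->
  vnorm (U *m x) ^+ 2 = vnorm x ^+ 2.
Proof. by move=> hU; rewrite -!qform1 /qform -form_congr mulmx1 hU. Qed.

(* Cauchy-Schwarz for a positive semidefinite form, from the discriminant of
   the nonnegative real quadratic s |-> qform P (x - s y). *)

Lemma discriminant_le (a b c : R) : 0 <= c ->
  (forall s, 0 <= a - 2 * s * b + s ^+ 2 * c) -> b ^+ 2 <= a * c.
Proof.
move=> c0 H; have a0 : 0 <= a by have := H 0; rewrite !(mul0r, mulr0, expr0n) /=; lra.
have [c0'|cN0] := eqVneq c 0.
  rewrite c0' mulr0; have [->|bN0] := eqVneq b 0; first by rewrite expr0n.
  have := H ((a + 1) / (2 * b)); rewrite c0'.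
  have -> : a - 2 * ((a + 1) / (2 * b)) * b + ((a + 1) / (2 * b)) ^+ 2 * 0 = -1.
    by field.
  lra.
have cp : 0 < c by rewrite lt_def cN0 c0.
have hs : (b / c) * c = b by rewrite divfK.
have := H (b / c); move: hs; set s := b / c => hs hh; nra.
Qed.

Lemma cauchy_schwarz n (P : 'M[C]_n) x y (b : R) : is_psd P ->
  form P x y = (b%:C)%C -> b ^+ 2 <= qform P x * qform P y.
Proof.
move=> hP hb; have hh := hP.1.
have hyx : form P y x = (b%:C)%C by rewrite -form_conj // hb conjC_real.
apply: discriminant_le; first exact: psd_qform.
move=> s; have := psd_qform (x - (s%:C)%C *: y) hP.
suff -> : qform P (x - (s%:C)%C *: y) = qform P x - 2 * s * b + s ^+ 2 * qform P y by [].
rewrite /qform formDl !formDr !formNl !formNr !formZl !formZr conjC_real hb hyx.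
by rewrite (form_real x hh) (form_real y hh) /=; ring.
Qed.

Lemma qform_le_vnorm n (P : 'M[C]_n) x : is_psd P -> vnorm x = 1 ->
  qform P x <= vnorm (P *m x).
Proof.
move=> hP hx.
have h : form 1%:M x (P *m x) = ((qform P x)%:C)%C by rewrite -form_id form_real //; case: hP.
have := cauchy_schwarz (@psd1 n) h; rewrite !qform1 hx expr1n mul1r => hh.
have := psd_qform x hP; have := vnorm_ge0 (P *m x); nra.
Qed.

Definition diagR n (d : 'I_n -> R) : 'M[C]_n := diag_mx (\row_j ((d j)%:C)%C).

Lemma diagRB n (f g : 'I_n -> R) : diagR f - diagR g = diagR (fun j => f j - g j).
Proof. by apply/matrixP => i j; rewrite !mxE -mulrnBl -rmorphB. Qed.

Lemma diagRN n (f : 'I_n -> R) : - diagR f = diagR (fun j => - f j).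
Proof. by apply/matrixP => i j; rewrite !mxE -mulNrn rmorphN. Qed.

Lemma diagRM n (f g : 'I_n -> R) : diagR f *m diagR g = diagR (fun j => f j * g j).
Proof. by rewrite /diagR mulmx_diag; congr diag_mx; apply/rowP => j; rewrite !mxE -rmorphM. Qed.

Lemma qform_diagR n (d : 'I_n -> R) x : qform (diagR d) x = \sum_j d j * sqmod (x j ord0).
Proof.
rewrite /qform /form /diagR mul_mx_diag mxE raddf_sum; apply: eq_bigr => j _.
by rewrite !mxE mulrAC conjCM_sqmod -rmorphM mulrC.
Qed.

Lemma sqmod_delta n (i0 j : 'I_n) :
  sqmod ((delta_mx i0 ord0 : 'cV[C]_n) j ord0) = (j == i0)%:R.
Proof. by rewrite mxE eqxx andbT /sqmod; case: (j == i0); rewrite /= ?expr1n expr0n addr0. Qed.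

Lemma vnorm_delta n (j : 'I_n) : vnorm (delta_mx j ord0 : 'cV[C]_n) = 1.
Proof.
apply/eqP; rewrite -sqrp_eq1 ?vnorm_ge0 // vnorm2 (bigD1 j) //= big1 => [|i hi].
  by rewrite sqmod_delta eqxx addr0.
by rewrite sqmod_delta (negPf hi).
Qed.

Lemma qform_diagR_delta n (d : 'I_n -> R) j :
  qform (diagR d) (delta_mx j ord0 : 'cV[C]_n) = d j.
Proof.
rewrite qform_diagR (bigD1 j) //= big1 => [|i hi].
  by rewrite sqmod_delta eqxx mulr1 addr0.
by rewrite sqmod_delta (negPf hi) mulr0.
Qed.

Lemma herm_congr_diagR n (U : 'M[C]_n) d : is_herm (adjmx U *m diagR d *m U).
Proof.
have hd : adjmx (diagR d) = diagR d.
  apply/matrixP => i j; rewrite !mxE eq_sym.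
  by case: eqP => [->|_]; rewrite ?mulr1n ?mulr0n ?conjC_real ?rmorph0.
by rewrite /is_herm !adjmxM adjmxK hd mulmxA.
Qed.

Lemma psd_congr_diagR n (U : 'M[C]_n) d : (forall j, 0 <= d j) ->
  is_psd (adjmx U *m diagR d *m U).
Proof.
move=> hd; apply: psdP => [|x]; first exact: herm_congr_diagR.
rewrite /qform form_congr -/(qform _ _) qform_diagR.
by apply: sumr_ge0 => j _; apply: mulr_ge0 => //; exact: sqmod_ge0.
Qed.

Lemma hermitian_spectral n (A : 'M[C]_n) : is_herm A ->
  exists (U : 'M[C]_n) (d : 'I_n -> R),
    [/\ adjmx U *m U = 1%:M, U *m adjmx U = 1%:M & A = adjmx U *m diagR d *m U].
Proof.
move=> hA.
have hA' : A \is hermsymmx.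
  by apply/is_hermitianmxP; rewrite expr0 scale1r -map_trmx; exact: (esym hA).
have /hermitian_normalmx /orthomx_spectralP Aeq := hA'.
have hreal := hermitian_spectral_diag_real hA'.
have hU := spectral_unitarymx A.
move: Aeq hU; set P := spectralmx A; set sp := spectral_diag A => Aeq hU.
have hinv : invmx P = adjmx P.
  by apply/matrixP => i j; rewrite invmx_unitary // !mxE.
have e1 : P *m adjmx P = 1%:M by rewrite -hinv mulmxV // unitarymx_unit.
exists P, (fun j => complex.Re (sp 0 j)); split; [exact: mulmx1C | exact: e1 |].
have -> : diagR (fun j => complex.Re (sp 0 j)) = diag_mx sp.
  rewrite /diagR; congr diag_mx; apply/rowP => j; rewrite mxE.
  by rewrite RRe_real //; move/mxOverP: hreal; apply.
by rewrite -hinv.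
Qed.

Definition top_eigen n (A : 'M[C]_n) (al : R) (u : 'cV[C]_n) : Prop :=
  [/\ vnorm u = 1, qform A u = al & forall x, qform A x <= al * vnorm x ^+ 2].

Lemma top_eigen_exists n (A : 'M[C]_n) : (0 < n)%N -> is_herm A ->
  exists al u, top_eigen A al u.
Proof.
move=> n0 /hermitian_spectral [U [d [hU1 hU2 ->]]].
have [i0 _ Hi0] := @arg_maxP _ R 'I_n (Ordinal n0) xpredT d isT.
pose e := (delta_mx i0 ord0 : 'cV[C]_n).
have Ue : U *m (adjmx U *m e) = e by rewrite mulmxA hU2 mul1mx.
exists (d i0), (adjmx U *m e); split.
- by apply/eqP; rewrite -sqrp_eq1 ?vnorm_ge0 // -(vnorm_unitary _ hU1) Ue vnorm_delta expr1n.
- by rewrite /qform form_congr -/(qform _ _) Ue qform_diagR_delta.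
- move=> x; rewrite /qform form_congr -/(qform _ _) qform_diagR.
  rewrite -(vnorm_unitary x hU1) vnorm2 mulr_sumr.
  by apply: ler_sum => j _; apply: ler_wpM2r => //; [exact: sqmod_ge0 | exact: Hi0].
Qed.

Lemma diag_le_top_eigen n (B V : 'M[C]_n) b al u :
  adjmx V *m V = 1%:M -> V *m adjmx V = 1%:M ->
  B = adjmx V *m diagR b *m V -> top_eigen B al u -> forall j, b j <= al.
Proof.
move=> hV1 hV2 hB [_ _ hmax] j.
pose e := (delta_mx j ord0 : 'cV[C]_n).
have Ve : V *m (adjmx V *m e) = e by rewrite mulmxA hV2 mul1mx.
have := hmax (adjmx V *m e).
rewrite -(vnorm_unitary _ hV1) Ve vnorm_delta expr1n mulr1 hB.
by rewrite /qform form_congr -/(qform _ _) Ve qform_diagR_delta.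
Qed.

Lemma top_eigen_gt0 n (A : 'M[C]_n) al u : is_herm A -> ~ is_psd (- A) ->
  top_eigen A al u -> 0 < al.
Proof.
move=> hA nA [_ _ hmax]; rewrite ltNge; apply/negP => al0; apply: nA.
apply: psdP => [|x]; first exact: hermN.
have := hmax x; have := sqr_ge0 (vnorm x); rewrite qformN; nra.
Qed.

(* Over the empty index set every Hermitian matrix is positive. *)
Lemma dim_gt0 n (A : 'M[C]_n) : is_herm A -> ~ is_psd A -> (0 < n)%N.
Proof.
by case: n A => [|n] A hA nA //; exfalso; apply: nA; split => // x; rewrite mxE big_ord0.
Qed.

Lemma max0_decomp (x : R) :
  Num.max x 0 * Num.max (- x) 0 = 0 /\ Num.max x 0 - Num.max (- x) 0 = x.
Proof.
have [x0|x0] := leP x 0.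
  by rewrite max_l ?oppr_ge0 // mul0r sub0r opprK.
by rewrite max_r ?oppr_le0 ?(ltW x0) // mulr0 subr0.
Qed.

Lemma posneg_decomp_exists n (A : 'M[C]_n) : is_herm A ->
  exists p, is_posneg_decomp A p.
Proof.
move=> /hermitian_spectral [U [d [hU1 hU2 ->]]].
exists (adjmx U *m diagR (fun j => Num.max (d j) 0) *m U,
        adjmx U *m diagR (fun j => Num.max (- d j) 0) *m U); split => /=.
- by apply: psd_congr_diagR => j; rewrite le_max lexx orbT.
- by apply: psd_congr_diagR => j; rewrite le_max lexx orbT.
- rewrite !mulmxA -[_ *m U *m adjmx U]mulmxA hU2 mulmx1 -[_ *m diagR _ *m diagR _]mulmxA.
  rewrite diagRM.
  have -> : diagR (fun j => Num.max (d j) 0 * Num.max (- d j) 0) = 0.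
    by apply/matrixP => i j; rewrite !mxE (max0_decomp _).1 mul0rn.
  by rewrite mulmx0 mul0mx.
- rewrite -mulmxBl -mulmxBr diagRB; congr (_ *m diagR _ *m _).
  by apply: funext => j; rewrite (max0_decomp _).2.
Qed.


Lemma posneg_spec n (A : 'M[C]_n) : is_herm A -> is_posneg_decomp A (posneg A).
Proof. by move=> /posneg_decomp_exists [p hp]; exact: xgetI hp. Qed.

Lemma posneg_swap n (A P N : 'M[C]_n) : is_posneg_decomp A (P, N) ->
  is_posneg_decomp (- A) (N, P).
Proof.
by case=> /= hP hN hPN ->; split => //=; [exact: psd_mul_swap | rewrite opprB].
Qed.

Lemma le_of_quartic (r m : R) : 0 <= r -> 0 <= m -> r ^+ 4 <= r * (m * r ^+ 2) -> r <= m.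
Proof.
move=> r0 m0 h; have [->|rN0] := eqVneq r 0; first by [].
have rp : 0 < r by rewrite lt_def rN0 r0.
have : r ^+ 3 * (r - m) <= 0.
  have -> : r ^+ 3 * (r - m) = r ^+ 4 - r * (m * r ^+ 2) by ring.
  by rewrite subr_le0.
by rewrite pmulr_rle0 ?exprn_gt0 // subr_le0.
Qed.

(* Upper bound on |P x|: with y = P x we have <x, P y> = |y|^2, and since N
   vanishes on y = P x, <y, P y> = <y, A y> <= max(al, 0) |y|^2; combine with
   Cauchy-Schwarz and <x, P x> <= |y|. *)
Lemma posneg_part_bound n (A P N : 'M[C]_n) al u x :
  is_posneg_decomp A (P, N) -> top_eigen A al u -> vnorm x = 1 ->
  vnorm (P *m x) <= Num.max al 0.
Proof.
case=> /= hP hN hPN hA [_ _ hmax] hx.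
set y := P *m x; set r := vnorm y.
have xPy : form P x y = ((r ^+ 2)%:C)%C.
  by rewrite -form1 /form mulmx1 adjmxM hP.1 /y !mulmxA.
have Ny : N *m y = 0 by rewrite /y mulmxA (psd_mul_swap hP hN hPN) mul0mx.
have yPy : qform P y <= Num.max al 0 * r ^+ 2.
  have Ny0 : qform N y = 0 by rewrite /qform /form -mulmxA Ny mulmx0 mxE.
  have -> : qform P y = qform A y by rewrite hA qformD qformN Ny0 oppr0 addr0.
  apply: le_trans (hmax y) _; apply: ler_wpM2r; first exact: sqr_ge0.
  by rewrite le_max lexx.
apply: le_of_quartic; [exact: vnorm_ge0 | by rewrite le_max lexx orbT |].
rewrite (_ : 4 = 2 * 2)%N // exprM; apply: le_trans (cauchy_schwarz hP xPy) _.
apply: ler_pM => //; [exact: psd_qform | exact: psd_qform | exact: qform_le_vnorm].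
Qed.

Local Open Scope classical_set_scope.

(* For any decomposition A = P - N with P, N >= 0 and P N = 0, the operator
   norm of P is max(al, 0), al the top eigenvalue of A; the lower bound comes
   from <u, P u> >= <u, A u> = al. *)
Lemma opnorm_posneg n (A P N : 'M[C]_n) al u :
  is_posneg_decomp A (P, N) -> top_eigen A al u -> opnorm P = Num.max al 0.
Proof.
move=> hd htop; have [hP hN _ hA] := hd; have [hu hAu _] := htop.
set S := [set vnorm (P *m x) | x in [set x : 'cV[C]_n | vnorm x = 1]].
have ubS : ubound S (Num.max al 0).
  by move=> _ [x hx <-]; exact: posneg_part_bound hd htop hx.
have Su : S (vnorm (P *m u)) by exists u.
apply/eqP; rewrite eq_le; apply/andP; split.
  by apply: ge_sup => //; exists (vnorm (P *m u)).
have hs : vnorm (P *m u) <= opnorm P by apply: ub_le_sup => //; exists (Num.max al 0).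
rewrite ge_max (le_trans (vnorm_ge0 _) hs) andbT.
apply: le_trans hs; apply: le_trans (qform_le_vnorm hP hu).
by rewrite -hAu hA qformD qformN gerBl; exact: psd_qform.
Qed.

Lemma opnorm_pos_part n (A : 'M[C]_n) al u : is_herm A -> top_eigen A al u ->
  opnorm (pos_part A) = Num.max al 0.
Proof.
move=> /posneg_spec; rewrite /pos_part; case: (posneg A) => P N hd.
exact: opnorm_posneg hd.
Qed.

Lemma opnorm_neg_part n (A : 'M[C]_n) al u : is_herm A -> top_eigen (- A) al u ->
  opnorm (neg_part A) = Num.max al 0.
Proof.
move=> /posneg_spec; rewrite /neg_part; case: (posneg A) => P N /posneg_swap hd.
exact: opnorm_posneg hd.
Qed.

Local Close Scope classical_set_scope.

Lemma real_linear_opp n k (Phi : 'M[C]_n -> 'M[C]_k) A :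
  real_linear_on_herm Phi -> is_herm A -> Phi (- A) = - Phi A.
Proof.
case=> _ _ hZ hA; have := hZ (-1) A hA.
have -> : ((-1 : R)%:C)%C = -1 :> C by apply/eqP; rewrite eq_complex /= oppr0 !eqxx.
by rewrite !scaleN1r.
Qed.

(* Necessity: Phi maps the positive matrix alA 1 - A to alA 1 - B, so the
   top eigenvalue of B is at most that of A. *)
Lemma top_eigen_mono n k (Phi : 'M[C]_n -> 'M[C]_k) A B alA u alB v :
  real_linear_on_herm Phi -> positive_map Phi -> unital_map Phi ->
  is_herm A -> Phi A = B -> top_eigen A alA u -> top_eigen B alB v -> alB <= alA.
Proof.
case=> hH hD hZ hpos hun hA hB [_ _ hmax] [hv hBv _].
pose X := (alA%:C)%C *: (1%:M : 'M[C]_n) + ((-1)%:C)%C *: A.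
have hX : is_psd X.
  apply: psdP => [|x]; first by apply: hermD; apply: hermZ => //; exact: herm1.
  by rewrite qformD !qformZ qform1; have := hmax x; lra.
have hPX : Phi X = (alA%:C)%C *: 1%:M + ((-1)%:C)%C *: B.
  rewrite /X hD; [|exact/hermZ/herm1|exact/hermZ].
  by rewrite !hZ ?hun ?hB //; exact: herm1.
by have := psd_qform v (hpos _ hX); rewrite hPX qformD !qformZ qform1 hv hBv; lra.
Qed.

Definition interp_map n k (V : 'M[C]_k) (t : 'I_k -> R) (u v : 'cV[C]_n)
    (X : 'M[C]_n) : 'M[C]_k :=
  adjmx V *m diag_mx (\row_j ((t j)%:C%C * form X u u + (1 - t j)%:C%C * form X v v)) *m V.

Lemma interp_map_herm n k (V : 'M[C]_k) t (u v : 'cV[C]_n) X : is_herm X ->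
  interp_map V t u v X =
  adjmx V *m diagR (fun j => t j * qform X u + (1 - t j) * qform X v) *m V.
Proof.
move=> hX; rewrite /interp_map /diagR; congr (_ *m diag_mx _ *m _); apply/rowP => j.
by rewrite !mxE (form_real u hX) (form_real v hX) -!rmorphM -rmorphD.
Qed.

Lemma interp_map_linear n k (V : 'M[C]_k) t (u v : 'cV[C]_n) :
  real_linear_on_herm (interp_map V t u v).
Proof.
split => [X hX | X Y _ _ | r X _].
- by rewrite interp_map_herm //; exact: herm_congr_diagR.
- rewrite /interp_map -mulmxDl -mulmxDr; congr (_ *m _ *m _).
  by apply/matrixP => i j; rewrite !mxE !formMD -mulrnDl; congr (_ *+ _); ring.
- rewrite /interp_map scalemxAl scalemxAr; congr (_ *m _ *m _).
  by apply/matrixP => i j; rewrite !mxE !formMZ mulrnAr; congr (_ *+ _); ring.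
Qed.

(* A convex combination of the two states <u, . u>, <v, . v> is positive. *)
Lemma interp_map_positive n k (V : 'M[C]_k) t (u v : 'cV[C]_n) :
  (forall j, 0 <= t j <= 1) -> positive_map (interp_map V t u v).
Proof.
move=> ht X hX; rewrite interp_map_herm; last by case: hX.
apply: psd_congr_diagR => j; have /andP [t0 t1] := ht j.
by apply: addr_ge0; apply: mulr_ge0; rewrite ?subr_ge0 //; exact: psd_qform.
Qed.

Lemma interp_map_unital n k (V : 'M[C]_k) t (u v : 'cV[C]_n) :
  adjmx V *m V = 1%:M -> vnorm u = 1 -> vnorm v = 1 -> unital_map (interp_map V t u v).
Proof.
move=> hV hu hv; rewrite /unital_map interp_map_herm; last exact: herm1.
rewrite !qform1 hu hv expr1n.
have -> : diagR (fun j => t j * 1 + (1 - t j) * 1) = 1%:M :> 'M[C]_k.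
  by apply/matrixP => i j; rewrite !mxE -[1 in RHS]/((1%:C)%C); do 2 f_equal; ring.
by rewrite mulmx1.
Qed.

(* Sufficiency: if B = V^* diag(b) V with -beA <= b_j <= alA, the interpolating
   map with t_j = (b_j + beA) / (alA + beA) is positive, unital and sends A to B. *)
Lemma interp_map_exists n k (A : 'M[C]_n) (B V : 'M[C]_k) alA beA u v b :
  is_herm A -> top_eigen A alA u -> top_eigen (- A) beA v -> 0 < alA -> 0 < beA ->
  adjmx V *m V = 1%:M -> B = adjmx V *m diagR b *m V ->
  (forall j, b j <= alA) -> (forall j, - b j <= beA) ->
  exists Phi : 'M[C]_n -> 'M[C]_k,
    [/\ real_linear_on_herm Phi, positive_map Phi, unital_map Phi & Phi A = B].
Proof.
move=> hA [hu hAu _] [hv hAv _] alA0 beA0 hV hB hb1 hb2.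
have cN0 : alA + beA != 0 by rewrite gt_eqF // addr_gt0.
pose t j := (b j + beA) / (alA + beA).
exists (interp_map V t u v); split.
- exact: interp_map_linear.
- apply: interp_map_positive => j; have := hb1 j; have := hb2 j => h2 h1.
  have den0 : 0 <= alA + beA by rewrite addr_ge0 // ltW.
  have t0 : 0 <= t j by rewrite divr_ge0 //; lra.
  have t1 : 1 - t j = (alA - b j) / (alA + beA) by rewrite /t; field.
  by rewrite t0 -subr_ge0 t1 divr_ge0 //; lra.
- exact: interp_map_unital.
- rewrite interp_map_herm // hB; congr (_ *m diagR _ *m _); apply: funext => j.
  have hAv' : qform A v = - beA by rewrite -hAv qformN opprK.
  by rewrite hAu hAv' /t; field.
Qed.

End PositiveUnitalMaps.

Theorem theorem2 (R : realType) (n k : nat)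
    (A : 'M[R[i]]_n) (B : 'M[R[i]]_k) :
  is_herm A -> is_herm B ->
  ~ is_psd A -> ~ is_psd (- A) -> ~ is_psd B -> ~ is_psd (- B) ->
  (exists Phi : 'M[R[i]]_n -> 'M[R[i]]_k,
      [/\ real_linear_on_herm Phi, positive_map Phi, unital_map Phi & Phi A = B])
  <->
  (opnorm (pos_part B) <= opnorm (pos_part A) /\
   opnorm (neg_part B) <= opnorm (neg_part A)).
Proof.
move=> hA hB nA nmA nB nmB.
have n0 := dim_gt0 hA nA; have k0 := dim_gt0 hB nB.
have [alA [u tA]] := top_eigen_exists n0 hA.
have [beA [v tA']] := top_eigen_exists n0 (hermN hA).
have [alB [uB tB]] := top_eigen_exists k0 hB.
have [beB [vB tB']] := top_eigen_exists k0 (hermN hB).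
have alA0 := top_eigen_gt0 hA nmA tA.
have beA0 : 0 < beA by apply: top_eigen_gt0 (hermN hA) _ tA'; rewrite opprK.
rewrite (opnorm_pos_part hA tA) (opnorm_neg_part hA tA').
rewrite (opnorm_pos_part hB tB) (opnorm_neg_part hB tB').
rewrite (max_l (ltW alA0)) (max_l (ltW beA0)) !ge_max (ltW alA0) (ltW beA0) !andbT.
split => [[Phi [hL hP hU hPhi]] | [hb1 hb2]].
  split; first exact: top_eigen_mono hL hP hU hA hPhi tA tB.
  have hPhiN : Phi (- A) = - B by rewrite (real_linear_opp hL hA) hPhi.
  exact: top_eigen_mono hL hP hU (hermN hA) hPhiN tA' tB'.
have [V [b [hV1 hV2 hBV]]] := hermitian_spectral hB.
have hBV' : - B = adjmx V *m diagR (fun j => - b j) *m V.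
  by rewrite hBV -diagRN mulmxN mulNmx.
apply: (interp_map_exists hA tA tA' alA0 beA0 hV1 hBV) => j.
  exact: le_trans (diag_le_top_eigen hV1 hV2 hBV tB j) hb1.
exact: le_trans (diag_le_top_eigen hV1 hV2 hBV' tB' j) hb2.
Qed.
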